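(* Let $f:\mathbf{R}^d\times\mathbf{R}^n\to\mathbf{R}^d$ be Lipschitz continuous in the state variable with constant $L$, i.e. $\|f(x,a)-f(x',a)\|\le L\|x-x'\|$ for all $x,x'\in\mathbf{R}^d$ and all actions $a$, and odd in the action variable, i.e. $f(x,-a)=-f(x,a)$ for all $x,a$. Let $c>0$ and let $a:[0,2]\to[-c,c]^n$ be an action signal, and let $x:[0,2]\to\mathbf{R}^d$ be a solution of $\dot x(t)=f(x(t),a(t))$. Assume that $a(1+t)=-a(1-t)$ for all $t\in[0,1]$. Then $x(2-t)=x(t)$ for all $t\in[0,1]$.
   Context: This models teleoperation with a learned action map: $x(t)\in\mathbf{R}^d$ is the robot state (joint configuration), $a(t)\in\mathbf{R}^n$ with $n\ll d$ is the user's low-dimensional action, taking values in the bounded symmetric domain $[-c,c]^n$, and $f$ maps states and actions to state velocities, so the system evolves by $\dot x(t)=f(x(t),a(t))$. *)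

From HB Require Import structures.
From mathcomp Require Import all_boot all_order all_algebra.
From mathcomp Require Import all_classical all_reals all_analysis.
Set Implicit Arguments. Unset Strict Implicit. Unset Printing Implicit Defensive.
Import Order.TTheory GRing.Theory Num.Theory.
Import numFieldNormedType.Exports.
Local Open Scope ring_scope.

Definition enorm (R : realType) (k : nat) (v : 'rV[R]_k) : R :=
  Num.sqrt (\sum_(i < k) (v ord0 i) ^+ 2).

Definition in_box (R : realType) (n : nat) (c : R) (v : 'rV[R]_n) : Prop :=
  forall i : 'I_n, - c <= v ord0 i <= c.

From HB Require Import structures.
From mathcomp Require Import all_boot all_order all_algebra.
From mathcomp Require Import all_classical all_reals all_analysis.
From mathcomp Require Import ring lra.
Set Implicit Arguments. Unset Strict Implicit. Unset Printing Implicit Defensive.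
Import Order.TTheory GRing.Theory Num.Theory.
Import numFieldNormedType.Exports.
Local Open Scope ring_scope.
Local Open Scope classical_set_scope.

(* Running the trajectory backwards from t = 2, y(s) := x(2 - s) solves
   y' = - f(y, a(2 - s)) = f(y, a(s)), by oddness of f and the antisymmetry of a
   about t = 1.  So on [t, 1] the curves x and y solve the same Lipschitz ODE and
   meet at s = 1; Gronwall's inequality run backwards on |x - y|^2, whose derivative
   is at least -(1 + L^2) |x - y|^2, makes them agree on all of ]0, 1], and
   continuity of x at both ends of [0, 2] gives t = 0. *)

Lemma is_derive_mxP {R : realFieldType} {V : normedModType R} {m k : nat}
    (M : V -> 'M[R]_(m, k)) (t v : V) (D : 'M[R]_(m, k)) :
  is_derive t v M D <-> forall i j, is_derive t v (fun s => M s i j) (D i j).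
Proof.
split=> [[dM <-] i j | dMij].
  have dMij := (derivable_mxP M t v).1 dM i j.
  by rewrite derive_mx // mxE; exact: derivableP.
have dM : derivable M t v by apply/derivable_mxP => i j; case: (dMij i j).
apply: DeriveDef => //; rewrite derive_mx //.
by apply/matrixP => i j; rewrite mxE; case: (dMij i j).
Qed.

Lemma is_derive_reflect {R : realType} {m k : nat} (M : R -> 'M[R]_(m, k))
    (p s : R) (D : 'M[R]_(m, k)) :
  is_derive (p - s) 1 M D -> is_derive s 1 (fun u => M (p - u)) (- D).
Proof.
move=> /is_derive_mxP dM; apply/is_derive_mxP => i j.
have dreflect : is_derive s 1 (fun u : R => p - u) (-1).
  by rewrite -sub0r; apply: is_deriveB.
rewrite mxE -mulrN1.
exact: (is_derive1_comp (f := fun u => M u i j) (g := fun u => p - u)).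
Qed.

Section EuclideanNorm.
Context {R : realType} {k : nat}.
Implicit Types v w z : 'rV[R]_k.

Definition rv_dot v w : R := \sum_(i < k) v ord0 i * w ord0 i.

Lemma enorm_ge0 v : 0 <= enorm v.
Proof. exact: sqrtr_ge0. Qed.

Lemma enorm_sqr v : enorm v ^+ 2 = rv_dot v v.
Proof.
rewrite sqr_sqrtr; last by apply: sumr_ge0 => i _; exact: sqr_ge0.
by apply: eq_bigr => i _; rewrite expr2.
Qed.

Lemma enorm_eq0 v : enorm v = 0 -> v = 0.
Proof.
move=> /(congr1 (fun r => r ^+ 2)); rewrite enorm_sqr expr0n /= => vv0.
have sq_ge0 i : 0 <= v ord0 i * v ord0 i by rewrite -expr2 sqr_ge0.
apply/matrixP => i j; rewrite (ord1 i) mxE.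
by apply/eqP; rewrite -sqrf_eq0 expr2 (psumr_eq0P (fun j _ => sq_ge0 j) vv0).
Qed.

Lemma rv_dot_ge z w : - (enorm z ^+ 2 + enorm w ^+ 2) <= 2 * rv_dot z w.
Proof.
rewrite !enorm_sqr /rv_dot mulr_sumr -big_split -sumrN; apply: ler_sum => i _.
by have := sqr_ge0 (z ord0 i + w ord0 i); rewrite /=; nra.
Qed.

Lemma is_derive_enorm_sqr (h : R -> 'rV[R]_k) (t : R) (D : 'rV[R]_k) :
  is_derive t 1 h D ->
  is_derive t 1 (fun s => enorm (h s) ^+ 2) (2 * rv_dot (h t) D).
Proof.
move=> /is_derive_mxP dh.
have -> : (fun s => enorm (h s) ^+ 2) = \sum_(i < k) (fun s => h s ord0 i) ^+ 2.
  apply/funext => s; rewrite enorm_sqr fct_sumE.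
  by apply: eq_bigr => i _; rewrite exprfctE expr2.
rewrite /rv_dot mulr_sumr.
apply: (is_derive_eq (is_derive_sum (fun i => is_deriveX 2 (dh ord0 i)))).
by apply: eq_bigr => i _; rewrite expr1 /GRing.scale /= mulrA.
Qed.

End EuclideanNorm.

Lemma backward_gronwall {R : realType} (phi dphi : R -> R) (K t T : R) :
  t <= T ->
  (forall s, t <= s <= T -> is_derive s 1 phi (dphi s)) ->
  (forall s, t <= s <= T -> - K * phi s <= dphi s) ->
  phi t <= expR (K * (T - t)) * phi T.
Proof.
move=> tT dphiP dphi_ge.
pose psi s := expR (K * s) * phi s.
have dpsiP s : t <= s <= T ->
    is_derive s 1 psi (expR (K * s) * (K * phi s + dphi s)).
  move=> sI; have dKs : is_derive s 1 (fun u : R => K * u) K.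
    by rewrite -[X in is_derive _ _ _ X]mulr1; exact: is_deriveZ.
  apply: is_derive_eq.
    exact: is_deriveM (is_derive1_comp (is_derive_expR _) dKs) (dphiP s sI).
  by rewrite /GRing.scale /=; lra.
have psi_mono : psi t <= psi T.
  have interior s : s \in `]t, T[%R -> t <= s <= T.
    by rewrite in_itv /= => /andP[? ?]; apply/andP; split; apply: ltW.
  apply: (ger0_derive1_ndecr _ _ _ (lexx t) tT (lexx T)) => [s /interior sI|s /interior sI|].
  - by case: (dpsiP s sI).
  - have dpsi := dpsiP s sI; rewrite derive1E derive_val.
    by rewrite mulr_ge0 ?expR_ge0 //; have := dphi_ge s sI; nra.
  apply: derivable_within_continuous => s; rewrite in_itv /= => sI.
  by case: (dpsiP s sI).
rewrite -(ler_pM2l (expR_gt0 (K * t))) mulrA -expRD.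
by rewrite (_ : K * t + K * (T - t) = K * T) //; ring.
Qed.

Lemma lipschitz_ode_backward_uniq {R : realType} {k : nat}
    (g : R -> 'rV[R]_k -> 'rV[R]_k) (L : R) (u v : R -> 'rV[R]_k) (t T : R) :
  (forall s y y', enorm (g s y - g s y') <= L * enorm (y - y')) ->
  t <= T ->
  (forall s, t <= s <= T -> is_derive s 1 u (g s (u s))) ->
  (forall s, t <= s <= T -> is_derive s 1 v (g s (v s))) ->
  u T = v T -> u t = v t.
Proof.
move=> gLip tT du dv uvT.
pose phi s := enorm (u s - v s) ^+ 2.
pose dphi s := 2 * rv_dot (u s - v s) (g s (u s) - g s (v s)).
have dphiP s : t <= s <= T -> is_derive s 1 phi (dphi s).
  by move=> sI; apply/is_derive_enorm_sqr/is_deriveB; [exact: du | exact: dv].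
have dphi_ge s : t <= s <= T -> - (1 + L ^+ 2) * phi s <= dphi s.
  move=> _; apply: le_trans (rv_dot_ge _ _); rewrite /phi.
  have := gLip s (u s) (v s); have := enorm_ge0 (u s - v s).
  have := enorm_ge0 (g s (u s) - g s (v s)); nra.
have phiT : phi T = 0.
  by rewrite /phi uvT subrr enorm_sqr /rv_dot big1 // => i _; rewrite mxE mul0r.
have := backward_gronwall tT dphiP dphi_ge; rewrite phiT mulr0 => phit_le0.
apply/eqP; rewrite -subr_eq0; apply/eqP/enorm_eq0.
by apply/eqP; rewrite -sqrf_eq0 eq_le phit_le0 sqr_ge0.
Qed.

Lemma cvg_subr_at_right {R : realType} (p q : R) :
  (fun s => p - s) @ q^'+ --> (p - q)^'-.
Proof.
move=> P [e /= e0 He]; exists e => // s /= qs sq; apply: He; last by lra.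
by move: qs; rewrite /ball_ /= distrC (_ : p - q - (p - s) = s - q) //; ring.
Qed.

Lemma eq_at_right_cvg {R : realType} {V : normedModType R} (u v : R -> V) (p : R) :
  u @ p^'+ --> u p -> v @ p^'+ --> v p ->
  (\forall s \near p^'+, u s = v s) -> u p = v p.
Proof.
move=> uc vc uv.
have uvc : u @ p^'+ --> v p.
  by apply: cvg_trans vc; apply: near_eq_cvg; apply: filterS uv => s ->.
exact: cvg_unique uc uvc.
Qed.

Lemma is_derive_time_reversal {R : realType} {d n : nat}
    (f : 'rV[R]_d -> 'rV[R]_n -> 'rV[R]_d) (a : R -> 'rV[R]_n)
    (x : R -> 'rV[R]_d) (p s : R) :
  (forall y u, f y (- u) = - f y u) ->
  a (p - s) = - a s ->
  is_derive (p - s) 1 x (f (x (p - s)) (a (p - s))) ->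
  is_derive s 1 (fun u => x (p - u)) (f (x (p - s)) (a s)).
Proof. by move=> f_odd a_refl /is_derive_reflect; rewrite a_refl f_odd opprK. Qed.

Theorem theorem1 (R : realType) (d n : nat)
  (f : 'rV[R]_d -> 'rV[R]_n -> 'rV[R]_d) (L : R)
  (hLip : forall (x x' : 'rV[R]_d) (u : 'rV[R]_n),
      enorm (f x u - f x' u) <= L * enorm (x - x'))
  (hodd : forall (x : 'rV[R]_d) (u : 'rV[R]_n), f x (- u) = - f x u)
  (c : R) (hc : 0 < c)
  (a : R -> 'rV[R]_n) (ha : forall t : R, 0 <= t <= 2 -> in_box c (a t))
  (x : R -> 'rV[R]_d)
  (hxc : {within `[0, 2], continuous x})
  (hxd : forall t : R, 0 < t < 2 -> is_derive t 1 x (f (x t) (a t)))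
  (hsym : forall t : R, 0 <= t <= 1 -> a (1 + t) = - a (1 - t)) :
  forall t : R, 0 <= t <= 1 -> x (2 - t) = x t.
Proof.
have a_refl s : 0 <= s <= 1 -> a (2 - s) = - a s.
  move=> sI; have := hsym (1 - s); rewrite subKr (_ : 1 + (1 - s) = 2 - s); last by ring.
  by apply; lra.
have x_refl t : 0 < t <= 1 -> x (2 - t) = x t.
  move=> tI; symmetry.
  apply: (@lipschitz_ode_backward_uniq _ _ (fun s y => f y (a s)) L x (fun s => x (2 - s)) t 1).
  - by move=> s y y'; exact: hLip.
  - by case/andP: tI.
  - by move=> s sI; apply: hxd; lra.
  - move=> s sI; apply: (is_derive_time_reversal hodd); [apply: a_refl | apply: hxd]; lra.
  - by rewrite (_ : 2 - 1 = 1 :> R) //; lra.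
move=> t /andP[]; rewrite le_eqVlt => /predU1P[<- _|t0 t1]; last by apply: x_refl; lra.
have [_ x0 x2] := (continuous_within_itvP x (ltr0Sn R 1)).1 hxc.
apply: (@eq_at_right_cvg _ _ (fun s => x (2 - s)) x 0).
- by rewrite subr0; apply: cvg_comp x2; rewrite -[X in X^'-](subr0 2); exact: cvg_subr_at_right.
- exact: x0.
- near=> s; apply: x_refl; apply/andP; split; near: s; first exact: nbhs_right_gt.
  by apply: nbhs_right_le; lra.
Unshelve. all: by end_near.
Qed.
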